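(* Let $\alpha:R\to R'$ be a Jordan homomorphism, let $R''$ be the subring of $R'$ generated by $R^\alpha$, and let $\overline\alpha:C\to C''$ be the (well defined) mapping $R(1,0)\cdot E(T)\mapsto R'(1',0')\cdot E(T^\alpha)$ for finite sequences $T$ in $R$. Then: (a) $\overline\alpha$ takes pairs of distant points to pairs of distant points; (b) $\overline\alpha$ is a harmonic mapping, i.e. it maps every harmonic quadruple of points of $C$ to a harmonic quadruple.
   Context: Rings are associative with $1$. A Jordan homomorphism $\alpha:R\to R'$ satisfies $(a+b)^\alpha=a^\alpha+b^\alpha$, $1^\alpha=1'$, $(aba)^\alpha=a^\alpha b^\alpha a^\alpha$. For $t$ in a ring, $E(t):=\begin{pmatrix} t&1\\-1&0\end{pmatrix}$; $E(T):=E(t_1)\cdots E(t_n)$ for $T=(t_1,\ldots,t_n)$ ($=I$ if $n=0$), $T^\alpha:=(t_1^\alpha,\ldots,t_n^\alpha)$. The projective line $\mathbb{P}(R)$ is the set of submodules $R(a,b)\leq R^2$ with $(a,b)$ the first row of a matrix in $GL_2(R)$, with right action $R(a,b)\cdot M=R((a,b)M)$. Points $R(a,b),R(c,d)$ are distant if $\{(a,b),(c,d)\}$ is a basis of $R^2$. $C$ is the connected component of $R(1,0)$ in the distant graph of $\mathbb{P}(R)$; $\mathbb{P}(R'')$ is identified with a subset of $\mathbb{P}(R')$ via $R''(a,b)\mapsto R'(a,b)$ and $C''$ is the connected component of $R''(1',0')$ in $\mathbb{P}(R'')$. A quadruple $(p_0,p_1,p_2,p_3)$ of points of $\mathbb{P}(R)$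 is harmonic (cross ratio $-1$) if there are $M\in GL_2(R)$ and a unit $u\in R^*$ with $p_0=R(1,0)M$, $p_1=R(0,1)M$, $p_2=R(u,1)M$, $p_3=R(-u,1)M$; harmonic quadruples and distant pairs in the image are understood in $\mathbb{P}(R')$. *)

(* Rings: associative with 1 (pzRingType, not necessarily
   commutative, 1 = 0 allowed). *)
From mathcomp Require Import all_boot all_order all_algebra.
Set Implicit Arguments. Unset Strict Implicit. Unset Printing Implicit Defensive.
Import GRing.Theory.
Local Open Scope ring_scope.

Definition jordan_hom (R R' : pzRingType) (f : R -> R') : Prop :=
  [/\ forall a b, f (a + b) = f a + f b,
      f 1 = 1 &
      forall a b, f (a * b * a) = f a * f b * f a].

Definition is_unit (R : pzRingType) (u : R) : Prop :=
  exists v, u * v = 1 /\ v * u = 1.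

Definition inGL2 (R : pzRingType) (M : 'M[R]_2) : Prop :=
  exists N : 'M[R]_2, M *m N = 1%:M /\ N *m M = 1%:M.

Definition pair2 (R : pzRingType) (a b : R) : 'rV[R]_2 :=
  \row_(j < 2) (if (j : nat) == 0%N then a else b).

Definition mx2 (R : pzRingType) (a b c d : R) : 'M[R]_2 :=
  \matrix_(i < 2, j < 2)
    (if (i : nat) == 0%N then (if (j : nat) == 0%N then a else b)
     else (if (j : nat) == 0%N then c else d)).

Definition Emx (R : pzRingType) (t : R) : 'M[R]_2 := mx2 t 1 (-1) 0.
Definition EmxS (R : pzRingType) (T : seq R) : 'M[R]_2 :=
  foldr (fun t M => Emx t *m M) 1%:M T.

(* The left submodule R x of R^2 generated by x (a "point" is such a set). *)
Definition span1 (R : pzRingType) (x : 'rV[R]_2) : 'rV[R]_2 -> Prop :=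
  fun v => exists r : R, v = r *: x.

Definition same_pt (R : pzRingType) (p q : 'rV[R]_2 -> Prop) : Prop :=
  forall v, p v <-> q v.

Definition is_point (R : pzRingType) (p : 'rV[R]_2 -> Prop) : Prop :=
  exists M : 'M[R]_2, inGL2 M /\ same_pt p (span1 (row 0 M)).

Definition basis2 (R : pzRingType) (x y : 'rV[R]_2) : Prop :=
  (forall v : 'rV[R]_2, exists r s : R, v = r *: x + s *: y) /\
  (forall r s r' s' : R, r *: x + s *: y = r' *: x + s' *: y -> r = r' /\ s = s').

Definition distant (R : pzRingType) (p q : 'rV[R]_2 -> Prop) : Prop :=
  exists x y : 'rV[R]_2,
    same_pt p (span1 x) /\ same_pt q (span1 y) /\ basis2 x y.

(* harmonic quadruple (cross ratio -1); R(a,b)·M = R((a,b)M) *)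
Definition harmonic (R : pzRingType) (p0 p1 p2 p3 : 'rV[R]_2 -> Prop) : Prop :=
  exists (M : 'M[R]_2) (u : R), inGL2 M /\ is_unit u /\
    same_pt p0 (span1 (pair2 1 0 *m M)) /\
    same_pt p1 (span1 (pair2 0 1 *m M)) /\
    same_pt p2 (span1 (pair2 u 1 *m M)) /\
    same_pt p3 (span1 (pair2 (- u) 1 *m M)).

Definition ptE (R : pzRingType) (T : seq R) : 'rV[R]_2 -> Prop :=
  span1 (pair2 1 0 *m EmxS T).

(* Everything rests on the well-definedness of [alphabar]: multiplying by
   [E(T')^-1] reduces it to showing that [R(1,0) E(U) = R(1,0)] implies
   [R'(1,0) E(U^alpha) = R'(1,0)].  Splitting off the last two factors of [U],
   this becomes: if [a = E(s)_00] is a unit, then so is [a' = E(s^alpha)_00] and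
   [alpha (a^-1 E(s)_01) = a'^-1 E(s^alpha)_01].  The matrix [E(s) Z E(s)^T],
   transposed formally so that no entries are commuted, has entries that are
   Jordan expressions in [z] and the entries of [s], so [alpha] is compatible
   with them.  Its corner is [a z p - a r] with [p], [r] entries of [E(s)^-1],
   and [p] is a unit (inverted by a Schur complement); the resulting identities
   [alpha (a z p) = a' alpha(z) p'] and [alpha (p z a) = p' alpha(z) a'] make
   [a'] invertible and give the quotient formula.

   Both claims then follow by moving one point to [R(1,0)]: a point distant from
   [R(1,0)] is some [R(x,1) = R(1,0) E(x)], and a harmonic quadruple starting at
   [R(1,0) E(T0)] can be written with a matrix [mx2 l 0 m k * E(T0)], whose
   points [R(c,1) M] are [R(k^-1 (c l + m), 1) E(T0)]; their images are obtained
   by additivity of [alpha]. *)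

From mathcomp Require Import all_boot all_order all_algebra.
Set Implicit Arguments. Unset Strict Implicit. Unset Printing Implicit Defensive.
Import GRing.Theory.
Local Open Scope ring_scope.

Notation i0 := (@ord0 1).
Notation i1 := (@ord_max 1).

Ltac ring_simpl :=
  do 3 rewrite ?mulr0 ?mul0r ?mulr1 ?mul1r ?addr0 ?add0r ?mulrN1 ?mulN1r
    ?opprK ?subrr ?addNr ?oppr0 ?mulrN ?mulNr.

Section Mx2.
Variable R : pzRingType.
Implicit Types a b c d x y : R.

Lemma ord2P (i : 'I_2) : i = i0 \/ i = i1.
Proof. by case: i => [[|[|n]] Hn]; [left|right|]; rewrite //; apply: val_inj. Qed.

Lemma mx2_ext (M : 'M[R]_2) : M = mx2 (M i0 i0) (M i0 i1) (M i1 i0) (M i1 i1).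
Proof.
apply/matrixP => i j; rewrite mxE.
by case: (ord2P i) => ->; case: (ord2P j) => ->.
Qed.

Lemma mx2_inj a b c d a' b' c' d' :
  mx2 a b c d = mx2 a' b' c' d' -> [/\ a = a', b = b', c = c' & d = d'].
Proof.
move/matrixP => H.
by have := H i0 i0; have := H i0 i1; have := H i1 i0; have := H i1 i1;
  rewrite !mxE /= => -> -> -> ->.
Qed.

Lemma mx2_id : (1%:M : 'M[R]_2) = mx2 1 0 0 1.
Proof.
by apply/matrixP => i j; rewrite !mxE; case: (ord2P i) => ->; case: (ord2P j) => ->.
Qed.

Lemma sum_ord2 (F : 'I_2 -> R) : \sum_(k < 2) F k = F i0 + F i1.
Proof. by rewrite !big_ord_recl big_ord0 addr0; congr (_ + F _); apply: val_inj. Qed.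

Lemma mulmx2 a b c d a' b' c' d' :
  mx2 a b c d *m mx2 a' b' c' d' =
  mx2 (a * a' + b * c') (a * b' + b * d') (c * a' + d * c') (c * b' + d * d').
Proof.
apply/matrixP => i j; rewrite !mxE sum_ord2 !mxE.
by case: (ord2P i) => ->; case: (ord2P j) => ->.
Qed.

Lemma mulmx_eq1_entry01 (X Y : 'M[R]_2) :
  X *m Y = 1%:M -> X i0 i1 * Y i1 i1 + X i0 i0 * Y i0 i1 = 0.
Proof. by move/(congr1 (fun M : 'M[R]_2 => M i0 i1)); rewrite !mxE sum_ord2 addrC. Qed.

Lemma pair2_mx2 a b a' b' c' d' :
  pair2 a b *m mx2 a' b' c' d' = pair2 (a * a' + b * c') (a * b' + b * d').
Proof. by apply/matrixP => i j; rewrite !mxE sum_ord2 !mxE; case: (ord2P j) => ->. Qed.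

Lemma pair2_row (v : 'rV[R]_2) : v = pair2 (v ord0 i0) (v ord0 i1).
Proof. by apply/matrixP => i j; rewrite (ord1 i) !mxE; case: (ord2P j) => ->. Qed.

Lemma pair10_mul (M : 'M[R]_2) : pair2 1 0 *m M = pair2 (M i0 i0) (M i0 i1).
Proof. by rewrite {1}(mx2_ext M) pair2_mx2; ring_simpl. Qed.

Lemma scale_pair2 r a b : r *: pair2 a b = pair2 (r * a) (r * b).
Proof. by apply/matrixP => i j; rewrite !mxE; case: (ord2P j) => ->. Qed.

Lemma add_pair2 a b a' b' : pair2 a b + pair2 a' b' = pair2 (a + a') (b + b').
Proof. by apply/matrixP => i j; rewrite !mxE; case: (ord2P j) => ->. Qed.

Lemma pair2_inj a b a' b' : pair2 a b = pair2 a' b' -> a = a' /\ b = b'.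
Proof. by move/matrixP => H; have := H ord0 i0; have := H ord0 i1; rewrite !mxE /= => -> ->. Qed.

Lemma pair2_lower_mul (c l m k : R) (X : 'M[R]_2) :
  pair2 c 1 *m (mx2 l 0 m k *m X) = pair2 (c * l + m) k *m X.
Proof. by rewrite mulmxA pair2_mx2; ring_simpl. Qed.

Lemma pair2_Emx x y t : pair2 x y *m Emx t = pair2 (x * t - y) x.
Proof. by rewrite pair2_mx2; ring_simpl. Qed.

End Mx2.

Section RingLemmas.
Variable R : pzRingType.
Implicit Types a b u v x : R.

Lemma one_eq0_all (h : (1 : R) = 0) x : x = 0.
Proof. by rewrite -[x]mulr1 h mulr0. Qed.

Lemma is_unit_mul a b : is_unit a -> is_unit b -> is_unit (a * b).
Proof.
move=> [ai [a1 a2]] [bi [b1 b2]]; exists (bi * ai); split.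
- by rewrite -mulrA (mulrA b) b1 mul1r a1.
- by rewrite -mulrA (mulrA ai) a2 mul1r b2.
Qed.

Lemma is_unitN a : is_unit a -> is_unit (- a).
Proof. by move=> [ai [a1 a2]]; exists (- ai); rewrite !mulrNN. Qed.

Lemma linv_rinv l x r : l * x = 1 -> x * r = 1 -> l = r.
Proof. by move=> hl hr; rewrite -[l]mulr1 -hr mulrA hl mul1r. Qed.

Lemma mul_sandwichDl a b c :
  (a + b) * c * (a + b) = a * c * a + (a * c * b + b * c * a) + b * c * b.
Proof. by rewrite mulrDl !mulrDr !mulrDl !addrA; congr (_ + _); apply: addrAC. Qed.

Lemma linv_mul_rel a b ai p pi r :
  ai * a = 1 -> p * pi = 1 -> b * p + a * r = 0 -> ai * b = - (r * pi).
Proof.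
move=> a2 p1 rel; have bp : b * p = - (a * r) by apply: (addIr (a * r)); rewrite rel addNr.
by rewrite -[b]mulr1 -p1 (mulrA b) bp mulNr mulrN !mulrA a2 mul1r.
Qed.

Lemma inv_mx2_corner (X Y : 'M[R]_2) ai :
  X *m Y = 1%:M -> Y *m X = 1%:M -> X i0 i0 * ai = 1 -> ai * X i0 i0 = 1 ->
  let schur := X i1 i1 - X i1 i0 * ai * X i0 i1 in
  Y i1 i1 * schur = 1 /\ schur * Y i1 i1 = 1.
Proof.
rewrite {1 2}(mx2_ext X) {1 2}(mx2_ext Y) !mulmx2 mx2_id.
move=> /mx2_inj [_ xy01 _ xy11] /mx2_inj [_ _ yx10 yx11] a1 a2 /=; split.
- have yc : Y i1 i1 * X i1 i0 = - (Y i1 i0 * X i0 i0).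
    by apply: (addrI (Y i1 i0 * X i0 i0)); rewrite subrr.
  by rewrite mulrBr !mulrA yc !mulNr opprK -(mulrA (Y i1 i0)) a1 mulr1 addrC.
- have yb : X i0 i1 * Y i1 i1 = - (X i0 i0 * Y i0 i1).
    by apply: (addrI (X i0 i0 * Y i0 i1)); rewrite subrr.
  by rewrite mulrBl -!mulrA yb !mulrN opprK (mulrA ai) a2 mul1r addrC.
Qed.

Lemma inGL2_mul (A B : 'M[R]_2) : inGL2 A -> inGL2 B -> inGL2 (A *m B).
Proof.
move=> [A' [a1 a2]] [B' [b1 b2]]; exists (B' *m A'); split.
- by rewrite -mulmxA (mulmxA B) b1 mul1mx a1.
- by rewrite -mulmxA (mulmxA A') a2 mul1mx b2.
Qed.

Lemma inGL2_lower (g : R) : inGL2 (mx2 1 0 g 1).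
Proof. by exists (mx2 1 0 (- g) 1); rewrite !mulmx2 mx2_id; ring_simpl. Qed.

Lemma inGL2_lower_unit (M : 'M[R]_2) : inGL2 M ->
  M i0 i1 = 0 -> is_unit (M i0 i0) -> is_unit (M i1 i1).
Proof.
move=> [N]; rewrite (mx2_ext M) (mx2_ext N) !mulmx2 mx2_id !mxE /=.
move=> [/mx2_inj [_ e01 _ e11] /mx2_inj [_ _ _ f11]] z [mi [_ m2]].
move: e01 e11 f11; rewrite z mul0r mulr0 !add0r addr0 => e01.
have n01 : N i0 i1 = 0 by rewrite -[N i0 i1]mul1r -m2 -mulrA e01 mulr0.
by rewrite n01 mulr0 add0r => e11 f11; exists (N i1 i1).
Qed.

End RingLemmas.

Section EMatrices.
Variable R : pzRingType.
Implicit Types (s : seq R) (t : R).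

Lemma EmxS_cat s1 s2 : EmxS (s1 ++ s2) = EmxS s1 *m EmxS s2.
Proof. by elim: s1 => [|t s IH] /=; rewrite ?mul1mx // IH mulmxA. Qed.

Lemma EmxS_rcons s t : EmxS (rcons s t) = EmxS s *m Emx t.
Proof. by rewrite -cats1 EmxS_cat /= mulmx1. Qed.

Definition Jmx : 'M[R]_2 := mx2 0 1 1 0.

Lemma Jmx_sqr : Jmx *m Jmx = 1%:M.
Proof. by rewrite mulmx2 mx2_id; ring_simpl. Qed.

Lemma EmxS_palindrome s : EmxS s *m Jmx *m EmxS (rev s) = Jmx.
Proof.
elim: s => [|t s IH] /=; first by rewrite mul1mx mulmx1.
have EJE : Emx t *m Jmx *m Emx t = Jmx by rewrite !mulmx2; ring_simpl.
rewrite rev_cons EmxS_rcons.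
have -> : Emx t *m EmxS s *m Jmx *m (EmxS (rev s) *m Emx t) =
  Emx t *m (EmxS s *m Jmx *m EmxS (rev s)) *m Emx t by rewrite !mulmxA.
by rewrite IH EJE.
Qed.

(* [E(t)^-1 = E(0) E(-t) E(0)] *)
Fixpoint inv_seq s : seq R :=
  if s is t :: s' then inv_seq s' ++ [:: 0; - t; 0] else [::].

Lemma EmxS_mulV s : EmxS s *m EmxS (inv_seq s) = 1%:M.
Proof.
elim: s => [|t s IH] /=; first by rewrite mul1mx.
rewrite EmxS_cat -mulmxA (mulmxA (EmxS s)) IH mul1mx /= mulmx1 /Emx !mulmx2 mx2_id.
by ring_simpl.
Qed.

Lemma EmxS_Vmul s : EmxS (inv_seq s) *m EmxS s = 1%:M.
Proof.
elim: s => [|t s IH] /=; first by rewrite mul1mx.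
rewrite EmxS_cat -mulmxA (mulmxA _ (Emx t)).
have -> : EmxS [:: 0; - t; 0] *m Emx t = 1%:M.
  by rewrite /= mulmx1 /Emx !mulmx2 mx2_id; ring_simpl.
by rewrite mul1mx IH.
Qed.

Lemma EmxS_rev s : EmxS (rev s) = Jmx *m EmxS (inv_seq s) *m Jmx.
Proof.
have := congr1 (mulmx (Jmx *m EmxS (inv_seq s))) (EmxS_palindrome s).
by rewrite !mulmxA -(mulmxA Jmx (EmxS (inv_seq s))) EmxS_Vmul mulmx1 Jmx_sqr mul1mx.
Qed.

Lemma EmxS_rev_entries s :
  EmxS (rev s) i0 i0 = EmxS (inv_seq s) i1 i1 /\ EmxS (rev s) i1 i0 = EmxS (inv_seq s) i0 i1.
Proof.
rewrite EmxS_rev (mx2_ext (EmxS (inv_seq s))) !mulmx2 !mxE /=.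
by split; ring_simpl.
Qed.

Lemma inGL2_EmxS s : inGL2 (EmxS s).
Proof. by exists (EmxS (inv_seq s)); rewrite EmxS_mulV EmxS_Vmul. Qed.

Definition row0E s : 'rV[R]_2 := pair2 1 0 *m EmxS s.

Lemma row0E_cons t s : row0E (t :: s) = pair2 t 1 *m EmxS s.
Proof. by rewrite /row0E /= mulmxA pair2_Emx; ring_simpl. Qed.

Lemma row0E_rcons s t : row0E (rcons s t) = row0E s *m Emx t.
Proof. by rewrite /row0E EmxS_rcons mulmxA. Qed.

Lemma row0E_mulV s : row0E s *m EmxS (inv_seq s) = pair2 1 0.
Proof. by rewrite /row0E -mulmxA EmxS_mulV mulmx1. Qed.

Lemma row0E_cat s1 s2 : row0E (s1 ++ s2) = row0E s1 *m EmxS s2.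
Proof. by rewrite /row0E EmxS_cat mulmxA. Qed.

Lemma row0E_catVK s1 s2 : row0E (s1 ++ inv_seq s2) *m EmxS s2 = row0E s1.
Proof. by rewrite row0E_cat -mulmxA EmxS_Vmul mulmx1. Qed.

End EMatrices.

Section TransposedConjugate.
Variable R : pzRingType.
Implicit Types (s : seq R) (t z : R).

Definition Dmx : 'M[R]_2 := mx2 1 0 0 (-1).
Definition Emx_tr t : 'M[R]_2 := mx2 t (-1) 1 0.

(* [Nmx z s] is [E(s) Z E(s)^T] for [Z = mx2 z 1 0 0], computed without commuting
   entries: [D E(t) D] is the transpose of [E(t)]. *)
Definition Nmx z s : 'M[R]_2 :=
  EmxS s *m mx2 z 1 0 0 *m Dmx *m EmxS (rev s) *m Dmx.

Lemma Dmx_sqr : Dmx *m Dmx = 1%:M.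
Proof. by rewrite mulmx2 mx2_id; ring_simpl. Qed.

Lemma Nmx_nil z : Nmx z [::] = mx2 z 1 0 0.
Proof. by rewrite /Nmx /= mul1mx mulmx1 -mulmxA Dmx_sqr mulmx1. Qed.

Lemma Nmx_cons z t s : Nmx z (t :: s) = Emx t *m Nmx z s *m Emx_tr t.
Proof.
have DED : Dmx *m Emx t *m Dmx = Emx_tr t.
  by rewrite /Dmx /Emx /Emx_tr !mulmx2; ring_simpl.
rewrite /Nmx rev_cons EmxS_rcons -DED /= !mulmxA; congr (_ *m _).
by rewrite -!mulmxA (mulmxA Dmx Dmx) Dmx_sqr mul1mx.
Qed.

Lemma Nmx00 z s : Nmx z s i0 i0 =
  EmxS s i0 i0 * z * EmxS (rev s) i0 i0 - EmxS s i0 i0 * EmxS (rev s) i1 i0.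
Proof.
rewrite /Nmx (mx2_ext (EmxS s)) (mx2_ext (EmxS (rev s))) !mulmx2 !mxE /=.
by ring_simpl.
Qed.

Lemma Emx_conj_entries t (N : 'M[R]_2) (M := Emx t *m N *m Emx_tr t) :
  [/\ M i0 i0 = t * N i0 i0 * t + (t * N i0 i1 + N i1 i0 * t) + N i1 i1,
      M i1 i1 = N i0 i0,
      forall x, x * M i0 i1 + M i1 i0 * x =
        - ((x * t * N i0 i0 + N i0 i0 * t * x) + (x * N i1 i0 + N i0 i1 * x)) &
      forall x, x * M i1 i0 + M i0 i1 * x =
        - ((x * N i0 i0 * t + t * N i0 i0 * x) + (x * N i0 i1 + N i1 i0 * x))].
Proof.
rewrite /M (mx2_ext N) /Emx /Emx_tr !mulmx2 !mxE /=; ring_simpl; split=> // [|x|x].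
- by rewrite mulrDl !addrA; congr (_ + _); apply: addrAC.
- rewrite mulrN mulrDr opprD mulrBl mulNr !mulrA !opprD; exact: addrACA.
- rewrite mulrBr mulrN mulNr mulrDl opprD !mulrA !opprD; exact: addrACA.
Qed.

End TransposedConjugate.

Section Points.
Variable R : pzRingType.
Implicit Types (v w x y : 'rV[R]_2) (l : R).

Definition freev v := forall r s : R, r *: v = s *: v -> r = s.

Lemma free_mulmx v (N N' : 'M[R]_2) : N *m N' = 1%:M -> freev v -> freev (v *m N).
Proof.
move=> hN hv r s e; apply: hv.
by have := congr1 (mulmx^~ N') e; rewrite -!scalemxAl -!mulmxA hN !mulmx1.
Qed.

Lemma free_pair2_10 : freev (pair2 (1 : R) 0).
Proof. by move=> r r'; rewrite !scale_pair2 => /pair2_inj []; rewrite !mulr1. Qed.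

Lemma free_row0E s : freev (row0E s).
Proof. exact: free_mulmx (EmxS_mulV s) free_pair2_10. Qed.

Lemma same_pt_trans (p q r : 'rV[R]_2 -> Prop) :
  same_pt p q -> same_pt q r -> same_pt p r.
Proof. by move=> hpq hqr v; apply: iff_trans (hpq v) (hqr v). Qed.

Lemma same_span1_unit v w : freev v -> freev w -> same_pt (span1 v) (span1 w) ->
  exists l, is_unit l /\ v = l *: w.
Proof.
move=> hv hw H.
have [l hl] : span1 w v by apply/H; exists 1; rewrite scale1r.
have [m hm] : span1 v w by apply/H; exists 1; rewrite scale1r.
exists l; split => //; exists m; split.
- by apply: hv; rewrite scale1r -scalerA -hm -hl.
- by apply: hw; rewrite scale1r -scalerA -hl -hm.
Qed.

Lemma span1_scale_unit l v : is_unit l -> same_pt (span1 (l *: v)) (span1 v).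
Proof.
move=> [li [h1 h2]] u; split.
- by move=> [r ->]; exists (r * l); rewrite scalerA.
- by move=> [r ->]; exists (r * li); rewrite scalerA -mulrA h2 mulr1.
Qed.

Lemma basis2_free x y : basis2 x y -> freev x /\ freev y.
Proof.
move=> [_ hu]; split=> r s e.
- by have [] := hu r 0 s 0; rewrite ?scale0r ?addr0.
- by have [] := hu 0 r 0 s; rewrite ?scale0r ?add0r.
Qed.

Lemma basis2_scale x y l1 l2 : is_unit l1 -> is_unit l2 -> basis2 x y ->
  basis2 (l1 *: x) (l2 *: y).
Proof.
move=> [i1 [a1 a2]] [i2 [b1 b2]] [hs hu]; split.
- move=> v; have [r [s ->]] := hs v; exists (r * i1), (s * i2).
  by rewrite !scalerA -!mulrA a2 b2 !mulr1.
- move=> r s r' s'; rewrite !scalerA => /hu [e1 e2]; split.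
  + by rewrite -[r]mulr1 -a1 mulrA e1 -mulrA a1 mulr1.
  + by rewrite -[s]mulr1 -b1 mulrA e2 -mulrA b1 mulr1.
Qed.

Lemma basis2_mulmx x y (N N' : 'M[R]_2) : N *m N' = 1%:M -> N' *m N = 1%:M ->
  basis2 x y -> basis2 (x *m N) (y *m N).
Proof.
move=> h1 h2 [hs hu]; split.
- move=> v; have [r [s e]] := hs (v *m N'); exists r, s.
  by rewrite !scalemxAl -mulmxDl -e -mulmxA h2 mulmx1.
- move=> r s r' s' e; apply: hu.
  by have := congr1 (mulmx^~ N') e; rewrite !mulmxDl -!scalemxAl -!mulmxA h1 !mulmx1.
Qed.

Lemma basis2_10E (a b : R) : basis2 (pair2 1 0) (pair2 a b) <-> is_unit b.
Proof.
split=> [[hs hu]|[bi [h1 h2]]].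
  have [r [s]] := hs (pair2 0 1).
  rewrite !scale_pair2 add_pair2 => /pair2_inj [_]; rewrite mulr0 add0r => sb.
  exists s; split => //.
  have cb : (b * s - 1) * b = 0 by rewrite mulrBl -mulrA -sb mulr1 mul1r subrr.
  have := hu 0 (b * s - 1) ((b * s - 1) * a) 0.
  rewrite !scale0r add0r addr0 !scale_pair2 mulr1 mulr0 cb => /(_ erefl) [_].
  by move/eqP; rewrite subr_eq0 => /eqP.
split.
- move=> v; rewrite {1}(pair2_row v).
  exists (v ord0 i0 - v ord0 i1 * bi * a), (v ord0 i1 * bi).
  by rewrite !scale_pair2 add_pair2 mulr1 mulr0 add0r -(mulrA _ bi b) h2 mulr1 subrK.
- move=> r s r' s'; rewrite !scale_pair2 !add_pair2 !mulr1 !mulr0 !add0r.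
  move=> /pair2_inj [e1 e2].
  have es : s = s' by rewrite -[s]mulr1 -h1 mulrA e2 -mulrA h1 mulr1.
  by split => //; move: e1; rewrite es => /addIr.
Qed.

Lemma span1_pair2_unit (a k ki : R) (X : 'M[R]_2) : k * ki = 1 -> ki * k = 1 ->
  same_pt (span1 (pair2 a k *m X)) (span1 (pair2 (ki * a) 1 *m X)).
Proof.
move=> k1 k2; have -> : pair2 a k = k *: pair2 (ki * a) 1.
  by rewrite scale_pair2 mulrA k1 mul1r mulr1.
by rewrite -scalemxAl; apply: span1_scale_unit; exists ki.
Qed.

Lemma inGL2_pt10_decomp (M : 'M[R]_2) s :
  inGL2 M -> same_pt (ptE s) (span1 (pair2 1 0 *m M)) ->
  exists l m k, [/\ is_unit l, is_unit k & M = mx2 l 0 m k *m EmxS s].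
Proof.
move=> hM h; have [N [MN NM]] := hM.
have [l0 [[li [l1 l2]] e]] := same_span1_unit (@free_row0E s) (free_mulmx MN free_pair2_10) h.
pose M1 := M *m EmxS (inv_seq s).
have : l0 *: (pair2 1 0 *m M1) = pair2 1 0.
  by rewrite /M1 mulmxA scalemxAl -e row0E_mulV.
rewrite pair10_mul scale_pair2 => /pair2_inj [m00 m01].
have hm01 : M1 i0 i1 = 0 by rewrite -[M1 i0 i1]mul1r -l2 -mulrA m01 mulr0.
have hm00 : M1 i0 i0 = li by rewrite -[M1 i0 i0]mul1r -l2 -mulrA m00 mulr1.
have hu00 : is_unit (M1 i0 i0) by rewrite hm00; exists l0.
exists (M1 i0 i0), (M1 i1 i0), (M1 i1 i1); split=> //.
  exact: inGL2_lower_unit (inGL2_mul hM (inGL2_EmxS _)) hm01 hu00.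
by rewrite -hm01 -mx2_ext -mulmxA EmxS_Vmul mulmx1.
Qed.

End Points.
Arguments free_row0E {R} s.

Section JordanHom.
Variables (R R' : pzRingType) (f : R -> R').
Hypothesis hf : jordan_hom f.
Implicit Types (a b c u v w z : R).

Lemma jordanD a b : f (a + b) = f a + f b. Proof. by case: hf. Qed.
Lemma jordan1 : f 1 = 1. Proof. by case: hf. Qed.
Lemma jordan_triple a b : f (a * b * a) = f a * f b * f a. Proof. by case: hf. Qed.

Lemma jordan0 : f 0 = 0.
Proof. by apply: (@addrI _ (f 0)); rewrite -jordanD !addr0. Qed.

Lemma jordanN a : f (- a) = - f a.
Proof. by apply: (@addrI _ (f a)); rewrite -jordanD !subrr jordan0. Qed.

Lemma jordanB a b : f (a - b) = f a - f b. Proof. by rewrite jordanD jordanN. Qed.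

Lemma jordan_triple_sym a b c :
  f (a * b * c + c * b * a) = f a * f b * f c + f c * f b * f a.
Proof.
have := jordan_triple (a + c) b.
by rewrite !mul_sandwichDl !jordanD !jordan_triple mul_sandwichDl => /addIr /addrI.
Qed.

Lemma jordan_unit u : is_unit u -> is_unit (f u).
Proof.
move=> [v [h1 h2]].
have e : f u * f (v * v) * f u = 1 by rewrite -jordan_triple mulrA h1 mul1r h2 jordan1.
have e' : f u * (f (v * v) * f u) = 1 by rewrite mulrA.
by exists (f (v * v) * f u); split=> //; rewrite -(linv_rinv e e').
Qed.

Lemma map_inv_seq s : map f (inv_seq s) = inv_seq (map f s).
Proof. by elim: s => [|t s IH] //=; rewrite map_cat IH /= jordan0 jordanN. Qed.

Lemma jordan_affine_split u v w (u' v' w' : R') :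
  (forall z, f (u * z * v - w) = u' * f z * v' - w') ->
  f w = w' /\ forall z, f (u * z * v) = u' * f z * v'.
Proof.
move=> h; have hw : f w = w'.
  by apply: oppr_inj; have := h 0; rewrite jordan0 !mulr0 !mul0r !sub0r jordanN.
by split=> // z; have := h z; rewrite jordanB hw => /addIr.
Qed.

Lemma jordan_sandwich_inv a p ai pi (a' p' : R') :
  (forall z, f (a * z * p) = a' * f z * p') -> (forall z, f (p * z * a) = p' * f z * a') ->
  a * ai = 1 -> ai * a = 1 -> p * pi = 1 -> pi * p = 1 ->
  a' * (f (ai * pi) * p') = 1 /\ f (ai * pi) * p' * a' = 1.
Proof.
move=> hap hpa a1 a2 p1 p2.
have r : a' * (f (ai * pi) * p') = 1.
  by rewrite mulrA -hap !mulrA a1 mul1r p2 jordan1.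
have l : p' * f (pi * ai) * a' = 1.
  by rewrite -hpa !mulrA p1 mul1r a2 jordan1.
by split=> //; rewrite -(linv_rinv l r).
Qed.

Lemma jordan_quotient a b ai p pi r (a' b' ai' p' pi' r' : R') :
  (forall z, f (a * z * p) = a' * f z * p') -> f (a * r) = a' * r' ->
  ai * a = 1 -> p * pi = 1 -> pi * p = 1 -> ai' * a' = 1 -> p' * pi' = 1 ->
  b * p + a * r = 0 -> b' * p' + a' * r' = 0 -> f (ai * b) = ai' * b'.
Proof.
move=> hap har a2 p1 p2 a2' p1' rel rel'.
rewrite (linv_mul_rel a2 p1 rel) (linv_mul_rel a2' p1' rel') jordanN; congr (- _).
have : a' * f (r * pi) * p' = a' * r' by rewrite -hap -(mulrA a) -(mulrA r) p2 mulr1.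
move/(congr1 (fun x => ai' * x * pi')).
by rewrite /= !mulrA a2' !mul1r -(mulrA _ p') p1' mulr1.
Qed.

Definition jordan_related (N : 'M[R]_2) (N' : 'M[R']_2) : Prop :=
  [/\ f (N i0 i0) = N' i0 i0, f (N i1 i1) = N' i1 i1,
      forall x, f (x * N i0 i1 + N i1 i0 * x) = f x * N' i0 i1 + N' i1 i0 * f x &
      forall x, f (x * N i1 i0 + N i0 i1 * x) = f x * N' i1 i0 + N' i0 i1 * f x].

Lemma jordan_related_conj t N N' : jordan_related N N' ->
  jordan_related (Emx t *m N *m Emx_tr t) (Emx (f t) *m N' *m Emx_tr (f t)).
Proof.
case=> h00 h11 h01 h10.
have [e00 e11 e01 e10] := Emx_conj_entries t N.
have [e00' e11' e01' e10'] := Emx_conj_entries (f t) N'.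
split.
- by rewrite e00 e00' jordanD jordanD jordan_triple h01 h00 h11.
- by rewrite e11 e11'.
- by move=> x; rewrite e01 e01' jordanN jordanD jordan_triple_sym h10 h00.
- by move=> x; rewrite e10 e10' jordanN jordanD jordan_triple_sym h01 h00.
Qed.

Lemma jordan_related_Nmx z s : jordan_related (Nmx z s) (Nmx (f z) (map f s)).
Proof.
elim: s => [|t s IH] /=; last by rewrite !Nmx_cons; apply: jordan_related_conj.
by rewrite !Nmx_nil /jordan_related !mxE /= jordan0; split=> // x; ring_simpl.
Qed.

Lemma jordan_EmxS_corner_quotient s ai :
  EmxS s i0 i0 * ai = 1 -> ai * EmxS s i0 i0 = 1 ->
  exists ai', [/\ EmxS (map f s) i0 i0 * ai' = 1, ai' * EmxS (map f s) i0 i0 = 1 &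
    f (ai * EmxS s i0 i1) = ai' * EmxS (map f s) i0 i1].
Proof.
move=> a1 a2.
have [rev00 rev10] := EmxS_rev_entries s.
have [rev00' rev10'] := EmxS_rev_entries (map f s).
have [har hap] : f (EmxS s i0 i0 * EmxS (rev s) i1 i0) =
    EmxS (map f s) i0 i0 * EmxS (rev (map f s)) i1 i0 /\
  forall z, f (EmxS s i0 i0 * z * EmxS (rev s) i0 i0) =
    EmxS (map f s) i0 i0 * f z * EmxS (rev (map f s)) i0 i0.
  by apply: jordan_affine_split => z; have [] := jordan_related_Nmx z s; rewrite !Nmx00.
have [_ hpa] : f (EmxS (rev s) i0 i0 * EmxS s i1 i0) =
    EmxS (rev (map f s)) i0 i0 * EmxS (map f s) i1 i0 /\
  forall z, f (EmxS (rev s) i0 i0 * z * EmxS s i0 i0) =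
    EmxS (rev (map f s)) i0 i0 * f z * EmxS (map f s) i0 i0.
  apply: jordan_affine_split => z; have [] := jordan_related_Nmx z (rev s).
  by rewrite !Nmx00 map_rev !revK.
rewrite rev00 rev10 rev00' rev10' in har hap hpa.
have [p1 p2] := inv_mx2_corner (EmxS_mulV s) (EmxS_Vmul s) a1 a2.
set pi := _ - _ in p1 p2.
have [ai1 ai2] := jordan_sandwich_inv hap hpa a1 a2 p1 p2.
have [pi1 pi2] := jordan_sandwich_inv hpa hap p1 p2 a1 a2.
exists (f (ai * pi) * EmxS (inv_seq (map f s)) i1 i1); split=> //.
exact: (jordan_quotient hap har a2 p1 p2 ai2 pi1 (mulmx_eq1_entry01 (EmxS_mulV s))
  (mulmx_eq1_entry01 (EmxS_mulV (map f s)))).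
Qed.

Lemma jordan_fixes_pt10 U l : is_unit l -> row0E U = l *: pair2 1 0 ->
  exists l', is_unit l' /\ row0E (map f U) = l' *: pair2 1 0.
Proof.
move=> hl; case/lastP: U => [|s t].
  by exists 1; split; [exists 1; rewrite mulr1 | rewrite scale1r /row0E mulmx1].
case/lastP: s => [|s0 t0].
  (* [R(1,0) E(t) = R(t,1)] is [R(1,0)] only in the zero ring. *)
  rewrite /row0E /= mulmx1 pair2_Emx scale_pair2 => /pair2_inj [_ h10].
  have h1' : (1 : R') = 0 by rewrite -jordan1 h10 mulr0 jordan0.
  exists 1; split; first by exists 1; rewrite mulr1.
  by apply/matrixP => i j; rewrite [LHS](one_eq0_all h1') [RHS](one_eq0_all h1').
rewrite !map_rcons !row0E_rcons /row0E !pair10_mul !pair2_Emx scale_pair2 mulr1 mulr0.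
move=> /pair2_inj [hl0 h0]; rewrite h0 mul0r sub0r in hl0.
have [ai [a1 a2]] : is_unit (EmxS s0 i0 i0).
  by rewrite -[EmxS s0 i0 i0]opprK hl0; apply: is_unitN.
have [ai' [a1' a2' hq]] := jordan_EmxS_corner_quotient a1 a2.
have ht0 : t0 = ai * EmxS s0 i0 i1.
  by move/eqP: h0; rewrite subr_eq0 => /eqP <-; rewrite mulrA a2 mul1r.
exists (- EmxS (map f s0) i0 i0); split; first by apply: is_unitN; exists ai'.
by rewrite ht0 hq mulrA a1' mul1r subrr mul0r sub0r scale_pair2 mulr1 mulr0.
Qed.

Lemma jordan_row0E_scale T T' l : is_unit l -> row0E T = l *: row0E T' ->
  exists l', is_unit l' /\ row0E (map f T) = l' *: row0E (map f T').
Proof.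
move=> hl e.
have : row0E (T ++ inv_seq T') = l *: pair2 1 0.
  by rewrite row0E_cat e -scalemxAl row0E_mulV.
move=> /(jordan_fixes_pt10 hl) [l' [hl' e']]; exists l'; split=> //.
by rewrite -(row0E_catVK (map f T) (map f T')) -map_inv_seq -map_cat e' -scalemxAl.
Qed.

Lemma jordan_ptE_same T T' :
  same_pt (ptE T) (ptE T') -> same_pt (ptE (map f T)) (ptE (map f T')).
Proof.
move=> h; have [l [hl e]] := same_span1_unit (free_row0E T) (free_row0E T') h.
have [l' [hl' e']] := jordan_row0E_scale hl e.
by rewrite /ptE -/(row0E _) e'; apply: span1_scale_unit.
Qed.

Lemma jordan_distant T1 T2 :
  distant (ptE T1) (ptE T2) -> distant (ptE (map f T1)) (ptE (map f T2)).
Proof.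
move=> [x [y [h1 [h2 hb]]]]; have [hx hy] := basis2_free hb.
have [l1 [hl1 e1]] := same_span1_unit (free_row0E T1) hx h1.
have [l2 [hl2 e2]] := same_span1_unit (free_row0E T2) hy h2.
have : basis2 (row0E T1) (row0E T2) by rewrite e1 e2; apply: basis2_scale.
move/(basis2_mulmx (EmxS_Vmul T1) (EmxS_mulV T1)).
rewrite row0E_mulV -row0E_cat /row0E pair10_mul -/(row0E _).
set a := EmxS _ i0 i0; set b := EmxS _ i0 i1 => /basis2_10E [bi [b1 b2]].
have : row0E (T2 ++ inv_seq T1) = b *: row0E [:: bi * a].
  by rewrite row0E_cons mulmx1 /row0E pair10_mul scale_pair2 mulrA b1 mul1r mulr1.
move=> /jordan_row0E_scale [|l' [[li [l'1 l'2]] e']]; first by exists bi.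
exists (row0E (map f T1)), (row0E (map f T2)); do 2!split=> //.
rewrite -(row0E_catVK (map f T2) (map f T1)) -map_inv_seq -map_cat e' /=.
rewrite row0E_cons mulmx1 /row0E.
apply: basis2_mulmx (EmxS_mulV _) (EmxS_Vmul _) _.
by rewrite scale_pair2 mulr1; apply/basis2_10E; exists li.
Qed.

Lemma jordan_harmonic T0 T1 T2 T3 :
  harmonic (ptE T0) (ptE T1) (ptE T2) (ptE T3) ->
  harmonic (ptE (map f T0)) (ptE (map f T1)) (ptE (map f T2)) (ptE (map f T3)).
Proof.
move=> [M [u [hM [hu [h0 [h1 [h2 h3]]]]]]].
have [l [m [k [hl [ki [k1 k2]] eM]]]] := inGL2_pt10_decomp hM h0.
pose g := f (ki * m).
have chart c T : same_pt (ptE T) (span1 (pair2 c 1 *m M)) ->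
    same_pt (ptE (map f T)) (span1 (pair2 (f (ki * c * l) + g) 1 *m EmxS (map f T0))).
  move=> h; rewrite -jordanD -mulrA -mulrDr -row0E_cons.
  apply: (jordan_ptE_same (T' := ki * (c * l + m) :: T0)); apply: (same_pt_trans h).
  by rewrite eM pair2_lower_mul /ptE -/(row0E _) row0E_cons; apply: span1_pair2_unit.
exists (mx2 1 0 g 1 *m EmxS (map f T0)), (f (ki * u * l)); split.
  exact: inGL2_mul (inGL2_lower g) (inGL2_EmxS _).
split; first by apply: jordan_unit; do 2?apply: is_unit_mul => //; exists k.
rewrite !pair2_lower_mul !mulr1 add0r.
split; first by rewrite mulmxA pair2_mx2; ring_simpl.
split; first by have := chart 0 T1 h1; rewrite mulr0 mul0r jordan0 add0r.
split; first exact: chart u T2 h2.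
by have := chart (- u) T3 h3; rewrite mulrN mulNr jordanN.
Qed.

End JordanHom.

Theorem proposition4p8 (R R' : pzRingType) (f : R -> R') (hf : jordan_hom f) :
  (forall T1 T2 : seq R,
     distant (ptE T1) (ptE T2) ->
     distant (ptE (map f T1)) (ptE (map f T2))) /\
  (forall T0 T1 T2 T3 : seq R,
     harmonic (ptE T0) (ptE T1) (ptE T2) (ptE T3) ->
     harmonic (ptE (map f T0)) (ptE (map f T1)) (ptE (map f T2)) (ptE (map f T3))).
Proof. by split; [apply: jordan_distant | apply: jordan_harmonic]. Qed.
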